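(* Let $k,T\in\mathbb{N}$ and let $w\in\{0,1\}^T$ be a characteristic string which violates $k$-slot-CP. Then there exist a decomposition $w=xyz$ with $|y|\ge k+1$ and a fork $\hat F\vdash xy$ such that $\hat F$ is $x$-balanced.
   Context: Characteristic strings and forks. A characteristic string is $w=w_1\dots w_n\in\{0,1\}^n$; index $i$ is honest if $w_i=0$ and adversarial if $w_i=1$. A fork for $w$ is a rooted tree $F=(V,E)$ with edges directed away from the root $r$, together with a labeling $\ell:V\to\{0,\dots,n\}$, such that (F1) $\ell(r)=0$; (F2) labels strictly increase along every directed path; (F3) every honest index is the label of exactly one vertex; (F4) if $i<j$ are honest indices then the vertex labeled $i$ has strictly smaller depth than the vertex labeled $j$. Write $F\vdash w$. A vertex is honest if it is the root or its label is an honest index. A tine is a directed path starting at the root (not necessarily ending at a leaf); its length is its number of edges, $\ell(t)$ is the label of its last vertex, the depth of a vertex is the length of the tine ending at it, and $\mathrm{height}(F)$ is the maximum tine length. A tine $t$ is viable if its length is at least the depth of every honest vertex $v$ with $\ell(v)\le\ell(t)$. The trimmed tine $t^{\lceil k}$ is the portion of $t$ consisting of vertices labeled in $\{0,\dots,\ell(t)-k\}$; $t_1\preceq t_2$ means $t_1$ is a prefix of $t_2$. A fork $F\vdash w$ satisfies $k$-slot-CP if for all pairs of viable tines $t_1,t_2$ with $\ell(t_1)\le\ell(t_2)$ we have $t_1^{\lceil k}\preceq t_2$; $w$ violates $k$-slot-CP if some fork for $w$ does not satisfy it. For $w=xy$, tines $t_1,t_2$ of $F\vdash xy$ are disjoint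 over $y$ (written $t_1\not\sim_x t_2$) if they share no edge terminating at a vertex whose label is an index of $y$ (i.e., a label exceeding $|x|$). A fork $F\vdash xy$ is $x$-balanced if it contains tines $t_1\not\sim_x t_2$ with $\mathrm{length}(t_1)=\mathrm{length}(t_2)=\mathrm{height}(F)$. *)

From mathcomp Require Import all_boot.
Unset Printing Implicit Defensive.

(* Characteristic strings: w : seq bool, w_i = nth true w i.-1 (1-based),
   [false] = 0 = honest, [true] = 1 = adversarial. *)
Definition honest_idx (w : seq bool) (i : nat) : bool :=
  (0 < i <= size w) && ~~ nth true w i.-1.

(* A finite rooted tree given by a parent map on vertices 'I_nv, together
   with a labeling.  Edges are (par v, v) for v <> root, directed away from
   the root. *)
Record fork := Fork {
  nv   : nat;
  root : 'I_nv;
  par  : 'I_nv -> 'I_nv;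
  lab  : 'I_nv -> nat }.

Section ForkDefs.
Variable F : fork.
Local Notation V := 'I_(nv F).

(* u lies on the tine ending at v (u is an ancestor of v, or u = v). *)
Definition ancestor (u v : V) : Prop := exists j, iter j (par F) v = u.

Definition is_tree : Prop :=
  par F (root F) = root F /\ forall v : V, ancestor (root F) v.

(* depth v = length of the tine ending at v = least j with par^j v = root
   (for a tree, this j is < nv) *)
Definition depth (v : V) : nat :=
  find (fun j => iter j (par F) v == root F) (iota 0 (nv F)).

Definition height : nat := \max_(v : V) depth v.

Definition honest_vertex (w : seq bool) (v : V) : bool :=
  (v == root F) || honest_idx w (lab F v).

Definition is_fork (w : seq bool) : Prop :=
  is_tree /\
  (forall v : V, lab F v <= size w) /\
  lab F (root F) = 0 /\
  (forall v : V, v != root F -> lab F (par F v) < lab F v) /\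
  (forall i, honest_idx w i -> #|[pred v : V | lab F v == i]| = 1) /\
  (forall u v : V, honest_idx w (lab F u) -> honest_idx w (lab F v) ->
     lab F u < lab F v -> depth u < depth v).

(* tines are identified with their terminal vertex *)
Definition viable (w : seq bool) (t : V) : Prop :=
  forall v : V, honest_vertex w v -> lab F v <= lab F t -> depth v <= depth t.

(* t1^{ceil k} is a prefix of t2: every vertex of t1 with label in
   {0,..,lab t1 - k} lies on t2 *)
Definition trim_prefix (k : nat) (t1 t2 : V) : Prop :=
  forall u : V, ancestor u t1 -> lab F u + k <= lab F t1 -> ancestor u t2.

Definition slotCP (k : nat) (w : seq bool) : Prop :=
  forall t1 t2 : V, viable w t1 -> viable w t2 -> lab F t1 <= lab F t2 ->
    trim_prefix k t1 t2.

(* t1, t2 share no edge terminating at a vertex with label > |x| *)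
Definition disjoint_over (lenx : nat) (t1 t2 : V) : Prop :=
  ~ exists u : V, [/\ u != root F, lenx < lab F u, ancestor u t1 & ancestor u t2].

Definition balanced (lenx : nat) : Prop :=
  exists t1 t2 : V, [/\ disjoint_over lenx t1 t2,
                        depth t1 = height & depth t2 = height].
End ForkDefs.

Definition violates_slotCP (k : nat) (w : seq bool) : Prop :=
  exists F : fork, is_fork F w /\ ~ slotCP F k w.

Definition x_balanced (x : seq bool) (F : fork) : Prop := balanced F (size x).

(* A violation of k-slot-CP yields viable tines s1, s2 with l s1 <= l s2 that
   share no vertex labelled after some slot a with a + k < l s1.  If s2 is not
   deeper than s1, cut s1 down to the depth of s2; otherwise look at the ancestor
   v of s2 at the depth of s1.  Either l v <= l s1, and again we hold two
   disjoint tines of equal depth, or v (if viable) or an honest vertex h deeper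
   than v with l h <= l v replaces s2 or s1, which lowers l s2 or deepens s1, so
   the process terminates.  Two such equal-depth tines t1, t2 with t1 viable give
   an x-balanced fork for the prefix of w of length l t1, with |x| = a: keep the
   ancestors of t1, t2 and of the honest vertices up to slot l t1, and turn every
   other vertex into an adversarial copy of one of the tine ends, which caps the
   height at the depth of t1. *)

From Pilot Require Import Defs.
From mathcomp Require Import all_boot zify.
From Stdlib Require Import Classical ClassicalEpsilon.

Set Implicit Arguments.
Unset Strict Implicit.

Definition has_balanced_window (k : nat) (w : seq bool) : Prop :=
  exists x y z : seq bool,
    [/\ w = x ++ y ++ z, k.+1 <= size y &
        exists Fh : fork, is_fork Fh (x ++ y) /\ x_balanced x Fh].

Lemma find_iota_eq (p : pred nat) n j : j < n -> p j ->
  (forall i, i < j -> ~~ p i) -> find p (iota 0 n) = j.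
Proof.
move=> jn pj before_j.
have has_p : has p (iota 0 n) by apply/hasP; exists j; rewrite ?mem_iota.
have find_lt : find p (iota 0 n) < n.
  by rewrite -[n in _ < n](size_iota 0) -has_find.
have := nth_find 0 has_p; rewrite nth_iota // add0n => p_find.
case: (ltngtP (find p (iota 0 n)) j) => // [lt|gt].
  by move: (before_j _ lt); rewrite p_find.
by move: (before_find 0 gt); rewrite nth_iota ?add0n ?pj // (ltn_trans gt).
Qed.

Section Tree.
Variable F : fork.
Hypothesis F_tree : is_tree F.
Local Notation V := 'I_(nv F).
Local Notation P := (par F).
Local Notation r := (Defs.root F).
Local Notation d := (depth F).

Lemma iter_par_root j : iter j P r = r.
Proof. by elim: j => //= j ->; case: F_tree. Qed.

Lemma depth_spec (v : V) : [/\ iter (d v) P v = r, d v < nv F &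
  forall j, j < d v -> iter j P v != r].
Proof.
have [|j0 /eqP root_j0 min_j0] := ex_minnP (P := fun j => iter j P v == r).
  by case: F_tree => _ /(_ v) [j /eqP]; exists j.
have iter_neq i i' : i < i' <= j0 -> iter i P v != iter i' P v.
  case/andP=> lt le; apply/eqP => eq_ii'.
  suff : j0 <= j0 - i' + i by lia.
  by apply: min_j0; rewrite iterD eq_ii' -iterD subnK ?root_j0.
have j0_lt : j0 < nv F.
  have inj : injective (fun i : 'I_j0.+1 => iter i P v).
    move=> i i' /eqP; case: (ltngtP i i') => [lt|lt|/val_inj //].
    - by rewrite (negbTE (iter_neq i i' _)) // lt -ltnS ltn_ord.
    - by rewrite eq_sym (negbTE (iter_neq i' i _)) // lt -ltnS ltn_ord.
  by have := leq_card _ inj; rewrite !card_ord.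
have not_root j : j < j0 -> iter j P v != r.
  by move=> lt; apply: contraTneq lt => /eqP/min_j0; rewrite -leqNgt.
suff -> : d v = j0 by [].
by apply: find_iota_eq => //; apply/eqP.
Qed.

Lemma depth_lt_nv (v : V) : d v < nv F.
Proof. by case: (depth_spec v). Qed.

Lemma depth_uniq (v : V) j : iter j P v = r ->
  (forall i, i < j -> iter i P v != r) -> d v = j.
Proof.
move=> root_j min_j; case: (depth_spec v) => root_d _ min_d.
case: (ltngtP (d v) j) => // [lt|gt]; first by move: (min_j _ lt); rewrite root_d eqxx.
by move: (min_d _ gt); rewrite root_j eqxx.
Qed.

Lemma iter_par_depth (v : V) j : d v <= j -> iter j P v = r.
Proof.
move=> le; case: (depth_spec v) => root_d _ _.
by rewrite -(subnK le) iterD root_d iter_par_root.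
Qed.

Lemma depth_iter_par (v : V) j : j <= d v -> d (iter j P v) = d v - j.
Proof.
move=> le; case: (depth_spec v) => root_d _ min_d.
apply: depth_uniq => [|i lt]; rewrite -iterD; first by rewrite subnK.
by apply: min_d; rewrite -(subnK le) ltn_add2r.
Qed.

Lemma depth_root : d r = 0.
Proof. exact: depth_uniq. Qed.

Lemma depth_eq0 (v : V) : (d v == 0) = (v == r).
Proof.
apply/idP/eqP => [/eqP d0|->]; last by rewrite depth_root.
by case: (depth_spec v); rewrite d0.
Qed.

Lemma depth_gt0 (v : V) : (0 < d v) = (v != r).
Proof. by rewrite lt0n depth_eq0. Qed.

Lemma ancestorP (u v : V) :
  ancestor F u v <-> d u <= d v /\ iter (d v - d u) P v = u.
Proof.
split=> [[j <-]|[_ eq_u]]; last by exists (d v - d u).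
case: (leqP j (d v)) => [le|gt]; first by rewrite depth_iter_par // leq_subr subKn.
by rewrite iter_par_depth ?(ltnW gt) // depth_root subn0 iter_par_depth.
Qed.

Lemma ancestor_refl (v : V) : ancestor F v v.
Proof. by exists 0. Qed.

Lemma ancestor_trans (u v x : V) :
  ancestor F u v -> ancestor F v x -> ancestor F u x.
Proof. by case=> i <- [j <-]; exists (i + j); rewrite iterD. Qed.

Lemma ancestor_iter_par (v : V) j : ancestor F (iter j P v) v.
Proof. by exists j. Qed.

Lemma ancestor_par (v x : V) : ancestor F v x -> ancestor F (P v) x.
Proof. exact: ancestor_trans (ancestor_iter_par v 1). Qed.

Lemma root_ancestor (v : V) : ancestor F r v.
Proof. by case: F_tree. Qed.

Lemma ancestor_depth (u v : V) : ancestor F u v -> d u <= d v.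
Proof. by case/ancestorP. Qed.

Lemma ancestor_total (u v x : V) : ancestor F u x -> ancestor F v x ->
  d u <= d v -> ancestor F u v.
Proof.
move=> /ancestorP [ux eq_u] /ancestorP [vx eq_v] uv; exists (d v - d u).
have split_ux : d x - d u = d v - d u + (d x - d v) by lia.
by rewrite -[RHS]eq_u split_ux iterD eq_v.
Qed.

End Tree.

Section Fork.
Variables (F : fork) (w : seq bool).
Hypothesis Fw : is_fork F w.
Local Notation V := 'I_(nv F).
Local Notation P := (par F).
Local Notation r := (Defs.root F).
Local Notation d := (depth F).
Local Notation l := (lab F).

Lemma fork_tree : is_tree F.
Proof. by case: Fw. Qed.
Lemma lab_le_size (v : V) : l v <= size w.
Proof. by case: Fw => _ [lab_le _]; apply: lab_le. Qed.
Lemma lab_root : l r = 0.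
Proof. by case: Fw => _ [_ [->]]. Qed.
Lemma lab_par_lt (v : V) : v != r -> l (P v) < l v.
Proof. by case: Fw => _ [_ [_ [lab_par _]]]; apply: lab_par. Qed.
Lemma honest_lab_card i : honest_idx w i -> #|[pred v : V | l v == i]| = 1.
Proof. by case: Fw => _ [_ [_ [_ [card1 _]]]]; apply: card1. Qed.
Lemma honest_depth_lt (u v : V) : honest_idx w (l u) -> honest_idx w (l v) ->
  l u < l v -> d u < d v.
Proof. by case: Fw => _ [_ [_ [_ [_ depth_lt]]]]; apply: depth_lt. Qed.

Lemma lab_gt0 (v : V) : v != r -> 0 < l v.
Proof. by move/lab_par_lt; apply: leq_ltn_trans. Qed.

Lemma nonroot_lab (v : V) : 0 < l v -> v != r.
Proof. by apply: contraTneq => ->; rewrite lab_root. Qed.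

Lemma lab_iter_par (v : V) j : j <= d v -> l (iter j P v) + j <= l v.
Proof.
elim: j => [|j IHj] lt_j; first by rewrite addn0.
have : iter j P v != r by case: (depth_spec fork_tree v) => _ _; apply.
by move/lab_par_lt; have := IHj (ltnW lt_j); rewrite iterS; lia.
Qed.

Lemma lab_ancestor (u v : V) : ancestor F u v -> l u + (d v - d u) <= l v.
Proof.
by case/(ancestorP fork_tree) => _ {1}<-; apply/lab_iter_par/leq_subr.
Qed.

Lemma ancestor_lab_le (u v : V) : ancestor F u v -> l u <= l v.
Proof. by move/lab_ancestor; apply: leq_trans; apply: leq_addr. Qed.

Lemma honest_lab_inj (u v : V) : honest_idx w (l u) -> l u = l v -> u = v.
Proof.
move=> hon_u eq_uv.
have /card_le1_eqP : #|[pred x : V | l x == l u]| <= 1 by rewrite honest_lab_card.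
by apply; rewrite !inE /= -?eq_uv.
Qed.

Lemma honest_viable (h : V) : honest_idx w (l h) -> viable F w h.
Proof.
move=> hon_h v /orP[/eqP ->|hon_v] le_vh; first by rewrite (depth_root fork_tree).
case: (ltngtP (l v) (l h)) le_vh => // [lt|eq] _.
  by rewrite ltnW // honest_depth_lt.
by rewrite (honest_lab_inj hon_v eq).
Qed.

Lemma not_viable_witness (t : V) : ~ viable F w t ->
  exists h : V, [/\ honest_idx w (l h), l h <= l t & d t < d h].
Proof.
move/not_all_ex_not => [h not_h]; exists h.
have /and3P[hon_h le_h lt_h] : [&& honest_vertex F w h, l h <= l t & d t < d h].
  apply: contra_notT not_h; rewrite ltnNge.
  by case: (honest_vertex F w h); case: (l h <= l t); case: (d h <= d t).
split=> //; have : h != r by rewrite -(depth_gt0 fork_tree) (leq_ltn_trans _ lt_h).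
by case/orP: hon_h => [->|].
Qed.

End Fork.

Lemma honest_idx_take (w : seq bool) b i : b <= size w ->
  honest_idx (take b w) i -> honest_idx w i /\ i <= b.
Proof.
move=> le_b; rewrite /honest_idx size_takel // => /andP[/andP[i_gt0 i_le] adv].
by rewrite nth_take ?(leq_trans i_le) // in adv *; lia.
Qed.

Section Disjoint.
Variable F : fork.
Local Notation V := 'I_(nv F).

Lemma disjoint_overC a (s1 s2 : V) :
  disjoint_over F a s1 s2 -> disjoint_over F a s2 s1.
Proof. by move=> disj [c [? ? ? ?]]; apply: disj; exists c. Qed.

Lemma disjoint_over_ancestor_r a (s1 s2 x : V) : ancestor F x s2 ->
  disjoint_over F a s1 s2 -> disjoint_over F a s1 x.
Proof.
move=> x_s2 disj [c [? ? ? c_x]]; apply: disj; exists c.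
by split=> //; apply: ancestor_trans x_s2.
Qed.

Lemma disjoint_over_shared (a : nat) (s1 s2 h : V) : is_tree F ->
  ~ disjoint_over F a s1 h -> disjoint_over F a s1 s2 -> disjoint_over F a h s2.
Proof.
move=> F_tree not_disj disj [c2 [c2_nonroot c2_late c2_h c2_s2]].
apply: not_disj => -[c1 [c1_nonroot c1_late c1_s1 c1_h]].
case: (leqP (depth F c1) (depth F c2)) => [le|/ltnW le]; apply: disj.
- exists c1; split=> //; apply: ancestor_trans c2_s2.
  exact: ancestor_total c1_h c2_h le.
- exists c2; split=> //; apply: ancestor_trans c1_s1.
  exact: ancestor_total c2_h c1_h le.
Qed.

Lemma disjoint_over_off_tine (w : seq bool) (t1 t2 u : V) : is_fork F w ->
  ancestor F u t1 -> ~ ancestor F u t2 -> disjoint_over F (lab F u).-1 t1 t2.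
Proof.
move=> Fw u_t1 not_u_t2 [c [_ c_late c_t1 c_t2]].
have F_tree := fork_tree Fw.
case: (leqP (depth F u) (depth F c)) => [le|lt].
  by apply: not_u_t2; apply: ancestor_trans c_t2; exact: ancestor_total u_t1 c_t1 le.
have := lab_ancestor Fw (ancestor_total F_tree c_t1 u_t1 (ltnW lt)); lia.
Qed.

End Disjoint.

Section BalancedFork.
Variables (F : fork) (w : seq bool) (a k : nat) (t1 t2 : 'I_(nv F)).
Hypotheses (Fw : is_fork F w) (t1_viable : viable F w t1).
Hypotheses (depth_t2 : depth F t2 = depth F t1) (lab_t2 : lab F t2 <= lab F t1).
Hypotheses (lab_t1 : a + k < lab F t1) (disjoint_t12 : disjoint_over F a t1 t2).
Local Notation V := 'I_(nv F).
Local Notation P := (par F).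
Local Notation r := (Defs.root F).
Local Notation d := (depth F).
Local Notation l := (lab F).
Let F_tree : is_tree F := fork_tree Fw.

Lemma depth_t1_gt0 : 0 < d t1.
Proof. by rewrite (depth_gt0 F_tree) (nonroot_lab Fw) // (leq_ltn_trans _ lab_t1). Qed.

Definition t_adv : V := if honest_idx w (l t1) then t2 else t1.

Lemma t_adv_adversarial : ~~ honest_idx w (l t_adv).
Proof.
rewrite /t_adv; case: ifP => [hon1|-> //]; apply/negP => hon2.
have eq_lab : l t1 = l t2.
  case: (ltngtP (l t1) (l t2)) => // lt.
  - by have := honest_depth_lt Fw hon1 hon2 lt; rewrite depth_t2 ltnn.
  - by have := honest_depth_lt Fw hon2 hon1 lt; rewrite depth_t2 ltnn.
have eq_t12 := honest_lab_inj Fw hon1 eq_lab.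
apply: disjoint_t12; exists t1; split; rewrite -?(depth_gt0 F_tree) ?depth_t1_gt0 //.
- by rewrite (leq_ltn_trans _ lab_t1) ?leq_addr.
- exact: ancestor_refl.
- by rewrite eq_t12; exact: ancestor_refl.
Qed.

Lemma depth_t_adv : d t_adv = d t1.
Proof. by rewrite /t_adv; case: ifP. Qed.

Lemma t_adv_nonroot : t_adv != r.
Proof. by rewrite -(depth_gt0 F_tree) depth_t_adv depth_t1_gt0. Qed.

Definition kept (v : V) : Prop :=
  (exists h : V, [/\ honest_idx w (l h), l h <= l t1 & ancestor F v h])
  \/ ancestor F v t1 \/ ancestor F v t2.

Lemma kept_par (v : V) : kept v -> kept (P v).
Proof.
case=> [[h [hon_h le_h v_h]]|[v_t|v_t]].
- by left; exists h; split=> //; exact: ancestor_par.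
- by right; left; exact: ancestor_par.
- by right; right; exact: ancestor_par.
Qed.

Lemma kept_iter_par (v : V) j : kept v -> kept (iter j P v).
Proof. by move=> kept_v; elim: j => //= j; apply: kept_par. Qed.

Lemma kept_root : kept r.
Proof. by right; left; exact: root_ancestor. Qed.

Lemma kept_t1 : kept t1.
Proof. by right; left; exact: ancestor_refl. Qed.

Lemma kept_t2 : kept t2.
Proof. by right; right; exact: ancestor_refl. Qed.

Lemma kept_t_adv : kept t_adv.
Proof. by rewrite /t_adv; case: ifP => _; [apply: kept_t2 | apply: kept_t1]. Qed.

Lemma kept_depth (v : V) : kept v -> d v <= d t1.
Proof.
case=> [[h [hon_h le_h v_h]]|[v_t|v_t]].
- apply: leq_trans (ancestor_depth F_tree v_h) _.
  by apply: t1_viable => //; rewrite /honest_vertex hon_h orbT.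
- exact: (ancestor_depth F_tree v_t).
- by rewrite -depth_t2; exact: (ancestor_depth F_tree v_t).
Qed.

Lemma kept_lab (v : V) : kept v -> l v <= l t1.
Proof.
case=> [[h [_ le_h v_h]]|[v_t|v_t]].
- exact: leq_trans (ancestor_lab_le Fw v_h) le_h.
- exact: (ancestor_lab_le Fw v_t).
- exact: leq_trans (ancestor_lab_le Fw v_t) lab_t2.
Qed.

(* Every vertex outside [kept] is re-hung below [par t_adv] with label [l t_adv]:
   it becomes an adversarial copy of [t_adv], so no depth exceeds [d t1]. *)
Definition balanced_par (v : V) : V :=
  if excluded_middle_informative (kept v) then P v else P t_adv.
Definition balanced_lab (v : V) : nat :=
  if excluded_middle_informative (kept v) then l v else l t_adv.
Definition balanced_fork : fork := @Fork (nv F) r balanced_par balanced_lab.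

Local Notation Fb := balanced_fork.

Lemma balanced_par_kept (v : V) : kept v -> balanced_par v = P v.
Proof. by rewrite /balanced_par; case: excluded_middle_informative. Qed.
Lemma balanced_par_dropped (v : V) : ~ kept v -> balanced_par v = P t_adv.
Proof. by rewrite /balanced_par; case: excluded_middle_informative. Qed.
Lemma balanced_lab_kept (v : V) : kept v -> balanced_lab v = l v.
Proof. by rewrite /balanced_lab; case: excluded_middle_informative. Qed.
Lemma balanced_lab_dropped (v : V) : ~ kept v -> balanced_lab v = l t_adv.
Proof. by rewrite /balanced_lab; case: excluded_middle_informative. Qed.

Lemma iter_balanced_par_kept (v : V) j : kept v -> iter j balanced_par v = iter j P v.
Proof.
move=> kept_v; elim: j => //= j ->.
by rewrite balanced_par_kept //; apply: kept_iter_par.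
Qed.

Lemma iter_balanced_par_dropped (v : V) j : ~ kept v ->
  iter j.+1 balanced_par v = iter j.+1 P t_adv.
Proof.
move=> dropped_v; rewrite !iterSr balanced_par_dropped //.
by rewrite iter_balanced_par_kept //; apply/kept_par/kept_t_adv.
Qed.

Lemma ancestor_balanced_kept (u v : V) : kept v ->
  ancestor Fb u v -> ancestor F u v.
Proof. by move=> kept_v [j <-]; exists j; rewrite iter_balanced_par_kept. Qed.

Lemma depth_balanced_kept (v : V) : kept v -> depth Fb v = d v.
Proof.
by move=> kept_v; apply: eq_find => j /=; rewrite iter_balanced_par_kept.
Qed.

Lemma depth_balanced_dropped (v : V) : ~ kept v -> depth Fb v = d t_adv.
Proof.
move=> dropped_v; apply: eq_find => -[|j] /=; last first.
  by rewrite -!iterS iter_balanced_par_dropped.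
have v_nonroot : v != r by apply: contra_not_neq dropped_v => ->; exact: kept_root.
by rewrite (negbTE v_nonroot) (negbTE t_adv_nonroot).
Qed.

Lemma depth_balanced_le (v : V) : depth Fb v <= d t1.
Proof.
case: (classic (kept v)) => [kept_v|dropped_v].
  by rewrite depth_balanced_kept // kept_depth.
by rewrite depth_balanced_dropped // depth_t_adv.
Qed.

Lemma height_balanced : height Fb = d t1.
Proof.
apply/eqP; rewrite eqn_leq; apply/andP; split.
  by apply/bigmax_leqP => v _; apply: depth_balanced_le.
by rewrite -{1}(depth_balanced_kept kept_t1); exact: (leq_bigmax t1).
Qed.

Lemma balanced_tree : is_tree Fb.
Proof.
split=> [|v]; first by rewrite /= balanced_par_kept; [case: F_tree | exact: kept_root].
case: (classic (kept v)) => [kept_v|dropped_v].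
  case: (root_ancestor F_tree v) => j root_j.
  by exists j; rewrite iter_balanced_par_kept.
case: (root_ancestor F_tree t_adv) => j root_j; exists j.+1.
by rewrite iter_balanced_par_dropped // iterS root_j; case: F_tree.
Qed.

Lemma balanced_lab_par_lt (v : V) :
  v != r -> balanced_lab (balanced_par v) < balanced_lab v.
Proof.
move=> v_nonroot; case: (classic (kept v)) => [kept_v|dropped_v].
  have kept_pv := kept_par kept_v.
  by rewrite balanced_par_kept // !balanced_lab_kept // (lab_par_lt Fw).
rewrite balanced_par_dropped // (balanced_lab_dropped dropped_v) balanced_lab_kept.
  exact: (lab_par_lt Fw t_adv_nonroot).
exact/kept_par/kept_t_adv.
Qed.

Lemma honest_balanced_kept (v : V) :
  honest_idx (take (l t1) w) (balanced_lab v) -> kept v.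
Proof.
move=> hon_v; apply: NNPP => dropped_v; move: hon_v.
rewrite balanced_lab_dropped // => /(honest_idx_take (lab_le_size Fw t1)) [hon _].
by move: t_adv_adversarial; rewrite hon.
Qed.

Lemma balanced_is_fork : is_fork Fb (take (l t1) w).
Proof.
have le_size := lab_le_size Fw t1.
have honest_take := honest_idx_take le_size.
split; [exact: balanced_tree | split; [|split; [|split; [|split]]]].
- move=> v /=; rewrite size_takel //.
  case: (classic (kept v)) => [kept_v|dropped_v].
    by rewrite balanced_lab_kept // kept_lab.
  by rewrite balanced_lab_dropped // kept_lab //; exact: kept_t_adv.
- by rewrite /= balanced_lab_kept ?(lab_root Fw) //; exact: kept_root.
- exact: balanced_lab_par_lt.
- move=> i /[dup] /honest_take [hon_i le_i] hon_take.
  rewrite -(honest_lab_card Fw hon_i).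
  apply: eq_card => v; rewrite !inE /=; apply/eqP/eqP => [eq_i|eq_i].
    by rewrite -(balanced_lab_kept (honest_balanced_kept _)) // eq_i.
  have kept_v : kept v by left; exists v; split; rewrite ?eq_i //; exact: ancestor_refl.
  by rewrite balanced_lab_kept.
- move=> u v /= /[dup] /honest_balanced_kept kept_u +.
  move=> + /[dup] /honest_balanced_kept kept_v.
  rewrite !balanced_lab_kept // !depth_balanced_kept // => /honest_take [hon_u _].
  by move=> /honest_take [hon_v _]; apply: (honest_depth_lt Fw).
Qed.

Lemma balanced_disjoint : disjoint_over Fb a t1 t2.
Proof.
move=> [c [c_nonroot c_late c_t1 c_t2]].
have c_F_t1 := ancestor_balanced_kept kept_t1 c_t1.
have kept_c : kept c by right; left.
apply: disjoint_t12; exists c; split=> //.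
- by move: c_late; rewrite /= balanced_lab_kept.
- exact: ancestor_balanced_kept kept_t2 c_t2.
Qed.

Lemma balanced_window : has_balanced_window k w.
Proof.
have le_size := lab_le_size Fw t1.
have le_a : a <= l t1 by apply: leq_trans (leq_addr k a) (ltnW lab_t1).
exists (take a w), (drop a (take (l t1) w)), (drop (l t1) w).
have prefix : take a w ++ drop a (take (l t1) w) = take (l t1) w.
  by rewrite -{1}(take_takel _ le_a) cat_take_drop.
split; first by rewrite catA prefix cat_take_drop.
  by rewrite size_drop size_takel //; lia.
exists Fb; rewrite prefix; split; first exact: balanced_is_fork.
rewrite /x_balanced size_takel ?(leq_trans le_a) //.
exists t1, t2; rewrite height_balanced (depth_balanced_kept kept_t1).
by rewrite (depth_balanced_kept kept_t2) depth_t2; split=> //; exact: balanced_disjoint.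
Qed.

End BalancedFork.

Section DivergentPairs.
Variables (F : fork) (w : seq bool) (a k : nat).
Hypothesis Fw : is_fork F w.
Local Notation V := 'I_(nv F).
Local Notation P := (par F).
Local Notation d := (depth F).
Local Notation l := (lab F).
Let F_tree : is_tree F := fork_tree Fw.

Definition divergent_pair (s1 s2 : V) : Prop :=
  [/\ viable F w s1, viable F w s2, l s1 <= l s2, a + k < l s1
    & disjoint_over F a s1 s2].

Lemma divergent_pair_step (s1 s2 : V) : divergent_pair s1 s2 ->
  [\/ has_balanced_window k w,
      exists2 s2' : V, l s2' < l s2 & divergent_pair s1 s2'
    | exists2 s1' : V, d s1 < d s1' & divergent_pair s1' s2].
Proof.
move=> [viable1 viable2 le12 late1 disj12].
case: (leqP (d s2) (d s1)) => [le_d|lt_d].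
  pose s1' := iter (d s1 - d s2) P s1.
  apply: Or31; apply: (balanced_window (a := a) (t1 := s2) (t2 := s1') Fw) => //.
  - by rewrite /s1' (depth_iter_par F_tree) ?leq_subr // subKn.
  - exact: leq_trans (ancestor_lab_le Fw (ancestor_iter_par s1 _)) le12.
  - exact: leq_trans late1 le12.
  - exact: disjoint_over_ancestor_r (ancestor_iter_par s1 _) (disjoint_overC disj12).
pose v := iter (d s2 - d s1) P s2.
have v_s2 : ancestor F v s2 by exact: ancestor_iter_par.
have depth_v : d v = d s1.
  by rewrite /v (depth_iter_par F_tree) ?leq_subr // subKn // ltnW.
have disj1v : disjoint_over F a s1 v := disjoint_over_ancestor_r v_s2 disj12.
have lt_v : l v < l s2 by have := lab_ancestor Fw v_s2; rewrite depth_v; lia.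
case: (leqP (l v) (l s1)) => [le_v|gt_v].
  by apply: Or31; apply: (balanced_window (a := a) (t1 := s1) (t2 := v) Fw).
case: (classic (viable F w v)) => [viable_v|/(not_viable_witness Fw)].
  by apply: Or32; exists v => //; split=> //; exact: ltnW.
move=> [h [hon_h le_h lt_h]]; have viable_h := honest_viable Fw hon_h.
have gt_h : l s1 < l h.
  rewrite ltnNge; apply: contraTN lt_h => le_h1.
  by rewrite -leqNgt depth_v viable1 // /honest_vertex hon_h orbT.
case: (classic (disjoint_over F a s1 h)) => [disj1h|not_disj1h].
  by apply: Or32; exists h; [exact: leq_ltn_trans lt_v | split=> //; lia].
apply: Or33; exists h; first by rewrite -depth_v.
by split=> //; [lia | lia | exact: disjoint_over_shared F_tree not_disj1h disj12].
Qed.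

Lemma divergent_pair_balanced (s1 s2 : V) :
  divergent_pair s1 s2 -> has_balanced_window k w.
Proof.
have [n] := ubnP (l s2); elim: n => // n IHn in s1 s2 *; rewrite ltnS => le_s2.
have [m] := ubnP (nv F - d s1); elim: m => // m IHm in s1 *; rewrite ltnS => le_s1.
case/divergent_pair_step => [//|[s2' lt_s2' pair]|[s1' lt_s1' pair]].
- by apply: IHn pair; exact: leq_trans lt_s2' le_s2.
- by apply: IHm pair; have := depth_lt_nv F_tree s1'; lia.
Qed.

End DivergentPairs.

Unset Implicit Arguments.

Theorem theorem3 (k T : nat) (w : seq bool) :
  size w = T -> violates_slotCP k w ->
  exists x y z : seq bool,
    [/\ w = x ++ y ++ z, k.+1 <= size y &
        exists Fh : fork, is_fork Fh (x ++ y) /\ x_balanced x Fh].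
Proof.
move=> _ [F [Fw not_CP]].
apply: NNPP => no_window; apply: not_CP => t1 t2 viable1 viable2 le12 u u_t1 late_u.
apply: NNPP => not_u_t2; apply: no_window.
have u_nonroot : u != Defs.root F.
  by apply: contra_not_neq not_u_t2 => ->; exact: root_ancestor (fork_tree Fw) t2.
have lab_u_gt0 := lab_gt0 Fw u_nonroot.
apply: (divergent_pair_balanced (a := (lab F u).-1) Fw (s1 := t1) (s2 := t2)).
split=> //; first by lia.
exact: disjoint_over_off_tine Fw u_t1 not_u_t2.
Qed.
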